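(* Let $\{a(n)\}_{n\in\mathbb{N}}$ be a sequence of non-negative numbers with $\sum_{n=1}^{\infty}a(n)\le 1$. Then for every $\varepsilon>0$ there exist infinitely many $n\in\mathbb{N}$ such that $\sum_{\ell=1}^{n}a(\ell\cdot n)<\frac{\varepsilon}{n}$. *)

From Stdlib Require Import Reals.
Open Scope R_scope.

Fixpoint sum1 (f : nat -> R) (n : nat) : R :=
  match n with
  | O => 0
  | S m => sum1 f m + f (S m)
  end.

From Stdlib Require Import Reals.
From mathcomp Require all_boot all_order all_algebra zify lra Rstruct.

(* The multiples l * p (1 <= l <= p) of distinct primes p are pairwise
   distinct, so summing the inner sums over the primes p of [M, L) counts
   each a(m), m <= L^2, at most once and gives at most 1.  If every inner sum
   were >= eps / p, then eps times the sum of 1/p over these primes would be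
   at most 1; but the sum of the reciprocals of the primes diverges.  The
   divergence is proved by Erdos' counting argument: of the integers up to
   N = 2^T, at most (T+1)^k have all their prime factors below k, and the
   others are multiples of some prime p in [k, N], so that
   N <= (T+1)^k + N * sum_(k <= p <= N) 1/p. *)

(* ssrnat rebinds the notations of nat_scope, so the development lives in a
   module and the main theorem is stated outside it. *)
Module PrimeMultiples.
Import all_boot all_order all_algebra zify lra Rstruct.
Set Implicit Arguments. Unset Strict Implicit. Unset Printing Implicit Defensive.
Import Order.TTheory GRing.Theory Num.Theory.
Local Close Scope R_scope.
Local Open Scope nat_scope.

Definition below (k : nat) : nat_pred := [pred p | p < k].

Lemma sum_dvdn_nat p N : 0 < p -> \sum_(1 <= n < N.+1) (p %| n) = N %/ p.
Proof.
move=> p_gt0; elim: N => [|N IHN]; first by rewrite big_geq // div0n.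
by rewrite big_nat_recr //= IHN divnS // addnC.
Qed.

Lemma leq_smooth_add_multiples k N : 0 < N ->
  N <= \sum_(0 <= n < N.+1) (below k).-nat n
       + \sum_(k <= p < N.+1 | prime p) N %/ p.
Proof.
move=> N_gt0.
have smooth_or_multiple n : 0 < n <= N ->
    1 <= (below k).-nat n + \sum_(k <= p < N.+1 | prime p) (p %| n).
  case/andP=> n_gt0 le_nN.
  have [divisor|no_divisor] := leqP 1 (\sum_(k <= p < N.+1 | prime p) (p %| n)).
    exact: leq_trans divisor (leq_addl _ _).
  suff -> : (below k).-nat n by [].
  apply/pnatP=> // p p_pr p_n; rewrite inE /=; apply: contraTT no_divisor.
  rewrite -leqNgt => le_kp; rewrite -leqNgt big_mkcond (bigD1_seq p) ?iota_uniq //=.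
    by rewrite p_pr p_n leq_addr.
  by rewrite mem_index_iota le_kp ltnS (leq_trans (dvdn_leq _ p_n)).
rewrite [X in X <= _](_ : N = \sum_(1 <= n < N.+1) 1); last first.
  by rewrite sum_nat_const_nat muln1 subn1.
apply: leq_trans (_ : _ <= \sum_(1 <= n < N.+1) ((below k).-nat n
    + \sum_(k <= p < N.+1 | prime p) (p %| n))) _.
  by rewrite big_nat [X in _ <= X]big_nat leq_sum // => n /smooth_or_multiple.
rewrite big_split leq_add //=; first by rewrite [X in _ <= X](@big_cat_nat _ _ _ 1) // leq_addl.
rewrite exchange_big /=; apply: eq_leq; apply: eq_bigr => p p_pr.
by rewrite sum_dvdn_nat // prime_gt0.
Qed.

Lemma logn_le_exp2 p n T : 0 < n -> n <= 2 ^ T -> logn p n <= T.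
Proof.
move=> n_gt0 le_n_2T; have [-> //|logn_gt0] := posnP (logn p n).
have p_pr : prime p by move: logn_gt0; rewrite logn_gt0 mem_primes => /and3P[].
rewrite -(@leq_exp2l 2) //; apply: leq_trans le_n_2T.
apply: leq_trans (dvdn_leq n_gt0 (pfactor_dvdnn p n)).
by rewrite leq_exp2r // prime_gt1.
Qed.

(* An n <= 2^T whose prime factors are all below k is determined by its k
   exponents, each at most T. *)
Lemma count_smooth_le_exp2 k T :
  \sum_(0 <= n < (2 ^ T).+1) (below k).-nat n <= T.+1 ^ k.
Proof.
rewrite big_mkord (eq_bigr (fun n : 'I_(2 ^ T).+1 => if (below k).-nat n then 1 else 0)).
  2: by move=> n _; case: ifP.
rewrite -big_mkcond /= sum1_card.
pose exponents (n : 'I_(2 ^ T).+1) := [ffun p : 'I_k => inord (logn p n) : 'I_T.+1].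
rewrite -(@card_in_imset _ _ exponents).
  by apply: leq_trans (max_card _) _; rewrite card_ffun !card_ord.
move=> m n m_smooth n_smooth /ffunP eq_exponents; apply: val_inj => /=.
have m_gt0 : 0 < m by case/andP: m_smooth.
have n_gt0 : 0 < n by case/andP: n_smooth.
rewrite -(part_pnat_id m_smooth) -(part_pnat_id n_smooth).
apply: eq_partn_from_log => // p; rewrite inE /= => lt_pk.
move: (eq_exponents (Ordinal lt_pk)); rewrite !ffunE => /(congr1 val) /=.
by rewrite !inordK // ltnS logn_le_exp2 // -ltnS.
Qed.

Lemma poly_le_exp2 k : k * (2 * k + 2) + 2 <= 2 ^ (2 * k + 2).
Proof.
elim: k => [//|k IHk].
have -> : 2 * k.+1 + 2 = (2 * k + 2).+2 by lia.
rewrite !expnS; lia.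
Qed.

Lemma exists_exp2_ge_poly k : exists T, 2 * T.+1 ^ k <= 2 ^ T.
Proof.
exists (2 ^ (2 * k + 2)).-1.
rewrite prednK ?expn_gt0 // -expnM -expnS leq_exp2l //.
have := poly_le_exp2 k; have := expn_gt0 2 (2 * k + 2); lia.
Qed.

Local Open Scope ring_scope.

Lemma sum_prime_recip_tail_ge_half (R : realFieldType) k : exists N,
  1 / 2 <= \sum_(k <= p < N | prime p) (p%:R : R)^-1.
Proof.
have [T exp2_large] := exists_exp2_ge_poly k.
set N := (2 ^ T)%N; exists N.+1.
have N_gt0 : (0 < N)%N by rewrite expn_gt0.
have le_divn_recip : \sum_(k <= p < N.+1 | prime p) ((N %/ p)%:R : R)
    <= N%:R * \sum_(k <= p < N.+1 | prime p) (p%:R : R)^-1.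
  rewrite mulr_sumr; apply: ler_sum => p p_pr.
  by rewrite ler_pdivlMr ?ltr0n ?prime_gt0 // -natrM ler_nat leq_divM.
have le_N_divn : (N%:R : R) <= 2 * \sum_(k <= p < N.+1 | prime p) ((N %/ p)%:R : R).
  rewrite -natr_sum -(natrM R 2) ler_nat.
  have := leq_smooth_add_multiples k N_gt0; have := count_smooth_le_exp2 k T.
  rewrite -/N; lia.
have N_gt0' : (0 : R) < N%:R by rewrite ltr0n.
rewrite -(ler_pM2l N_gt0'); lra.
Qed.

Lemma sum_prime_recip_ge_halves (R : realFieldType) M j : exists2 L, (M <= L)%N &
  j%:R / 2 <= \sum_(M <= p < L | prime p) (p%:R : R)^-1.
Proof.
elim: j => [|j [L le_ML IHj]]; first by exists M; rewrite ?big_geq ?mul0r.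
have [N tail_ge] := sum_prime_recip_tail_ge_half R L.
exists (maxn L N); first by rewrite (leq_trans le_ML) ?leq_maxl.
rewrite (big_cat_nat le_ML) ?leq_maxl //=.
have : \sum_(L <= p < N | prime p) (p%:R : R)^-1
    <= \sum_(L <= p < maxn L N | prime p) (p%:R : R)^-1.
  have [le_NL|//] := leqP N L.
  by move: tail_ge; rewrite big_geq // => ?; lra.
rewrite -addn1 natrD mulrDl; lra.
Qed.

Lemma sum_prime_recip_unbounded (R : archiRealFieldType) M (K : R) : exists2 L, (M <= L)%N &
  K < \sum_(M <= p < L | prime p) (p%:R : R)^-1.
Proof.
have [j lt_K_j] : exists j : nat, K < j%:R / 2.
  have [K_le0|K_gt0] := lerP K 0; first by exists 1%N; lra.
  exists (Num.Def.archi_bound (2 * K)); have := archi_boundP (x := 2 * K); lra.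
have [L le_ML ge_j] := sum_prime_recip_ge_halves R M j.
by exists L => //; lra.
Qed.

Lemma ler_sum_uniq_sub (R : numDomainType) (I : eqType) (s t : seq I) (F : I -> R) :
  uniq s -> uniq t -> {subset s <= t} -> {in t, forall i, 0 <= F i} ->
  \sum_(i <- s) F i <= \sum_(i <- t) F i.
Proof.
move=> s_uniq t_uniq sub_st F_ge0.
have s_filter_t : perm_eq s [seq i <- t | i \in s].
  apply: uniq_perm => //; first exact: filter_uniq.
  by move=> i; rewrite mem_filter; case s_i: (i \in s); rewrite //= sub_st.
rewrite (perm_big _ s_filter_t) big_filter big_mkcond /= big_seq [X in _ <= X]big_seq.
by apply: ler_sum => i t_i; case: ifP => // _; apply: F_ge0.
Qed.

Lemma ltr_sum_exists (R : realDomainType) (I : eqType) (r : seq I) (P : pred I)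
    (F G : I -> R) :
  \sum_(i <- r | P i) F i < \sum_(i <- r | P i) G i -> exists2 i, (i \in r) && P i & F i < G i.
Proof.
have [/hasP[i r_i /andP[P_i lt_FG]] _|no_lt] := boolP (has (fun i => P i && (F i < G i)) r).
  by exists i; rewrite ?r_i.
rewrite ltNge => /negP[]; rewrite big_seq_cond [X in _ <= X]big_seq_cond.
apply: ler_sum => i /andP[r_i P_i].
by rewrite leNgt; apply: contra no_lt => lt_FG; apply/hasP; exists i; rewrite ?P_i.
Qed.

Lemma prime_le_of_mul_eq p q l m :
  prime p -> prime q -> (0 < m <= q)%N -> (l * p = m * q)%N -> (p <= q)%N.
Proof.
move=> p_pr q_pr /andP[m_gt0 le_mq] eq_lp_mq.
have [-> //|neq_pq] := eqVneq p q.
have : (p %| m * q)%N by rewrite -eq_lp_mq dvdn_mull.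
rewrite Euclid_dvdM // (dvdn_prime2 p_pr q_pr) (negbTE neq_pq) orbF.
by move/(dvdn_leq m_gt0)/leq_trans; apply.
Qed.

Lemma prime_multiples_inj p q l m : prime p -> prime q ->
  (0 < l <= p)%N -> (0 < m <= q)%N -> (l * p = m * q)%N -> p = q /\ l = m.
Proof.
move=> p_pr q_pr lp mq eq_lp_mq.
have eq_pq : p = q.
  by apply/eqP; rewrite eqn_leq (prime_le_of_mul_eq p_pr q_pr mq eq_lp_mq)
    (prime_le_of_mul_eq q_pr p_pr lp (esym eq_lp_mq)).
split=> //; move: eq_lp_mq; rewrite eq_pq => /eqP.
by rewrite eqn_pmul2r ?prime_gt0 // => /eqP.
Qed.

Lemma sum_prime_multiples_le (R : numDomainType) (a : nat -> R) M L :
  (forall n, (0 < n)%N -> 0 <= a n) ->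
  \sum_(M <= p < L | prime p) \sum_(1 <= l < p.+1) a (l * p)%N
    <= \sum_(1 <= n < (L * L).+1) a n.
Proof.
move=> a_ge0; rewrite -big_filter.
set P := [seq p <- index_iota M L | prime p].
rewrite -(big_allpairs_dep (h := fun p l => (l * p)%N) (r1 := P)
  (r2 := fun p => index_iota 1 p.+1) (F := a)).
have mem_P p : (p \in P) = prime p && (M <= p < L)%N.
  by rewrite mem_filter mem_index_iota.
apply: ler_sum_uniq_sub; rewrite ?iota_uniq //.
- apply: allpairs_uniq_dep => [|p _|]; rewrite ?filter_uniq ?iota_uniq //.
  move=> [p l] [q m] /allpairsPdep[p' [l' [P_p' l'_p' [-> ->]]]].
  move=> /allpairsPdep[q' [m' [P_q' m'_q' [-> ->]]]] /= eq_lp_mq.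
  move: P_p' P_q' l'_p' m'_q'; rewrite !mem_P !mem_index_iota ltnS.
  move=> /andP[p'_pr _] /andP[q'_pr _] l'p' m'q'.
  by have [-> ->] := prime_multiples_inj p'_pr q'_pr l'p' m'q' eq_lp_mq.
- move=> n /allpairsPdep[p [l [P_p l_p ->]]].
  move: P_p l_p; rewrite mem_P !mem_index_iota ltnS.
  move=> /and3P[p_pr _ lt_pL] /andP[l_gt0 le_lp].
  by rewrite muln_gt0 l_gt0 prime_gt0 //= ltnS leq_mul // ltnW // (leq_ltn_trans le_lp).
- by move=> n; rewrite mem_index_iota => /andP[/a_ge0].
Qed.

Theorem exists_small_multiple_sum (R : archiRealFieldType) (a : nat -> R) :
  (forall n, (0 < n)%N -> 0 <= a n) ->
  (forall N, \sum_(1 <= n < N.+1) a n <= 1) ->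
  forall eps : R, 0 < eps -> forall M, exists2 n, (M <= n)%N && (0 < n)%N &
    \sum_(1 <= l < n.+1) a (l * n)%N < eps / n%:R.
Proof.
move=> a_ge0 sum_a_le1 eps eps_gt0 M.
set M' := maxn M 1.
have [L _ large_recip] := sum_prime_recip_unbounded M' eps^-1.
set S := fun p => \sum_(1 <= l < p.+1) a (l * p)%N.
have sum_S_le1 : \sum_(M' <= p < L | prime p) S p <= 1.
  exact: le_trans (sum_prime_multiples_le _ _ a_ge0) (sum_a_le1 _).
have : \sum_(M' <= p < L | prime p) S p < \sum_(M' <= p < L | prime p) eps / p%:R.
  rewrite -mulr_sumr (le_lt_trans sum_S_le1) //.
  by rewrite -[X in X < _](divff (lt0r_neq0 eps_gt0)) ltr_pM2l.
move=> /ltr_sum_exists[p /andP[]]; rewrite mem_index_iota => /andP[le_M'p _] p_pr lt_S_eps.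
by exists p; rewrite ?(leq_trans (leq_maxl M 1) le_M'p) ?(leq_trans (leq_maxr M 1) le_M'p).
Qed.

Lemma sum1E (f : nat -> R) n : sum1 f n = \sum_(1 <= i < n.+1) f i.
Proof.
elim: n => [|n IHn]; first by rewrite big_geq.
by rewrite big_nat_recr //= IHn.
Qed.

Lemma exists_small_multiple_sum1 (a : nat -> R) :
  (forall n, Peano.le 1 n -> Rle 0 (a n)) -> (forall N, Rle (sum1 a N) 1) ->
  forall eps, Rlt 0 eps -> forall M : nat, exists n : nat,
    Peano.le M n /\ Peano.le 1 n /\ Rlt (sum1 (fun l => a (Nat.mul l n)) n) (Rdiv eps (INR n)).
Proof.
move=> a_ge0 sum_a_le1 eps /RltP eps_gt0 M.
have a_ge0' n : (0 < n)%N -> 0 <= a n by move/ssrnat.leP/a_ge0/RleP.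
have sum_a_le1' N : \sum_(1 <= n < N.+1) a n <= 1 by rewrite -sum1E; apply/RleP.
have [n /andP[le_Mn n_gt0] small] :=
  exists_small_multiple_sum a_ge0' sum_a_le1' eps_gt0 M.
exists n; split; [exact/ssrnat.leP | split; [exact/ssrnat.leP |]].
by apply/RltP; rewrite sum1E INRE RdivE.
Qed.

End PrimeMultiples.

Theorem lemma5 (a : nat -> R)
  (Ha_nonneg : forall n, (1 <= n)%nat -> 0 <= a n)
  (Ha_sum : forall N, sum1 a N <= 1) :
  forall eps, 0 < eps ->
  forall M : nat, exists n : nat, (M <= n)%nat /\ (1 <= n)%nat /\
    sum1 (fun l => a (l * n)%nat) n < eps / INR n.
Proof. exact (@PrimeMultiples.exists_small_multiple_sum1 a Ha_nonneg Ha_sum). Qed.
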